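(* Let $X$ be a real Banach space having Efremov's property $(\mathcal{E})$. Then $S_1(Y)=X^*$ for every norming linear subspace $Y\subset X^*$. Consequently, $X$ is fully Mazur.
   Context: For $A\subset X^*$, $S_1(A)$ denotes the set of all limits of $w^*$-convergent sequences contained in $A$. $X$ has Efremov's property $(\mathcal{E})$ if $S_1(C)=\overline{C}^{w^*}$ for every convex bounded set $C\subset X^*$. A linear subspace $Y\subset X^*$ is norming if $|||x|||=\sup\{x^*(x): x^*\in Y,\ \|x^*\|\le 1\}$ defines an equivalent norm on $X$. $X$ is fully Mazur if for every norming and norm-closed subspace $Y\subset X^*$, every $w^*$-sequentially continuous linear functional $f:Y\to\mathbb{R}$ is $w^*$-continuous. *)

From HB Require Import structures.
From mathcomp Require Import all_boot all_order all_algebra.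
From mathcomp Require Import all_classical all_reals all_analysis.
Set Implicit Arguments. Unset Strict Implicit. Unset Printing Implicit Defensive.
Import Order.TTheory GRing.Theory Num.Theory.
Import numFieldNormedType.Exports.
Local Open Scope classical_set_scope.
Local Open Scope ring_scope.

Section Dual.
Variables (R : realType) (X : normedModType R).

Definition dualp (f : X -> R) : Prop :=
  (forall (a : R) (x y : X), f (a *: x + y) = a * f x + f y) /\ continuous f.

Definition dualset : set (X -> R) := [set f | dualp f].

Definition dual_norm (f : X -> R) : R :=
  sup [set `|f x| | x in [set x : X | `|x| <= 1]].

Definition wstar_cvg (u : nat -> X -> R) (f : X -> R) : Prop :=
  forall x : X, u n x @[n --> \oo] --> f x.

Definition S1 (A : set (X -> R)) : set (X -> R) :=
  [set f | dualp f /\ exists u : nat -> X -> R,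
     (forall n, A (u n)) /\ wstar_cvg u f].

(* w*-closure of A (in Xdual) : basic w*-neighbourhoods are given by finitely
   many points of X and a radius *)
Definition wstar_closure (A : set (X -> R)) : set (X -> R) :=
  [set f | dualp f /\ forall (s : seq X) (e : R), 0 < e ->
     exists g, A g /\ forall x, x \in s -> `|g x - f x| < e].

Definition dual_convex (C : set (X -> R)) : Prop :=
  forall f g (t : R), C f -> C g -> 0 <= t <= 1 ->
    C (fun x => t * f x + (1 - t) * g x).

Definition dual_bounded (C : set (X -> R)) : Prop :=
  exists M : R, forall f, C f -> dual_norm f <= M.

Definition efremov : Prop :=
  forall C : set (X -> R), C `<=` dualset -> dual_convex C -> dual_bounded C ->
    S1 C = wstar_closure C.

Definition dual_subspace (Y : set (X -> R)) : Prop :=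
  [/\ Y `<=` dualset, Y (fun _ => 0) &
      forall (a : R) f g, Y f -> Y g -> Y (fun x => a * f x + g x)].

Definition norming_norm (Y : set (X -> R)) (x : X) : R :=
  sup [set f x | f in [set f | Y f /\ dual_norm f <= 1]].

(* Y is norming: ||| . ||| is an equivalent norm on X
   (the bound |||x||| <= ||x|| always holds for Y in Xdual). *)
Definition norming (Y : set (X -> R)) : Prop :=
  dual_subspace Y /\
  exists c m : R, 0 < c /\ 0 < m /\
    forall x : X, c * `|x| <= norming_norm Y x /\ norming_norm Y x <= m * `|x|.

Definition norm_closed (Y : set (X -> R)) : Prop :=
  forall (u : nat -> X -> R) (f : X -> R), (forall n, Y (u n)) -> dualp f ->
    dual_norm (fun x => u n x - f x) @[n --> \oo] --> (0 : R) -> Y f.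

Definition linear_on (Y : set (X -> R)) (F : (X -> R) -> R) : Prop :=
  forall (a : R) f g, Y f -> Y g -> F (fun x => a * f x + g x) = a * F f + F g.

Definition wstar_seq_continuous_on (Y : set (X -> R)) (F : (X -> R) -> R) : Prop :=
  forall (u : nat -> X -> R) f, (forall n, Y (u n)) -> Y f -> wstar_cvg u f ->
    F (u n) @[n --> \oo] --> F f.

Definition wstar_continuous_on (Y : set (X -> R)) (F : (X -> R) -> R) : Prop :=
  forall f, Y f -> forall e : R, 0 < e -> exists (s : seq X) (d : R), 0 < d /\
    forall g, Y g -> (forall x, x \in s -> `|g x - f x| < d) -> `|F g - F f| < e.

Definition fully_mazur : Prop :=
  forall Y : set (X -> R), norming Y -> norm_closed Y ->
    forall F : (X -> R) -> R, linear_on Y F -> wstar_seq_continuous_on Y F ->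
      wstar_continuous_on Y F.

End Dual.

From HB Require Import structures.
From mathcomp Require Import all_boot all_order all_algebra.
From mathcomp Require Import all_classical all_reals all_analysis.
From mathcomp Require Import ring lra.
Set Implicit Arguments. Unset Strict Implicit. Unset Printing Implicit Defensive.
Import Order.TTheory GRing.Theory Num.Theory.
Import numFieldNormedType.Exports.
Local Open Scope classical_set_scope.
Local Open Scope ring_scope.

(* Efremov's property reduces S_1(Y) = X^* to showing that each f in X^* lies
   in the w*-closure of a ball C of the norming subspace Y.  As Y is c-norming,
   f is dominated at every vector by an element of C when the radius of C is
   ||f|| / c, and a finite-dimensional projection argument turns this
   domination into w*-approximation of f by elements of C.
   Now let F be linear and w*-sequentially continuous on Y; then F is bounded.
   If its kernel H is norming, every g in Y is the w*-limit of a sequence in H,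
   so F = 0.  Otherwise some vectors are almost annihilated by H; rescaling them
   gives z with |g z - F g| <= e ||g|| on Y, and since Y is norming such z form
   a Cauchy sequence whose limit x0 satisfies F g = g x0.  Evaluation at x0 is
   w*-continuous. *)

Section Sequences.
Variable R : realType.

Lemma ler_sum_mem (T : eqType) (s : seq T) (F : T -> R) y :
  (forall x, 0 <= F x) -> y \in s -> F y <= \sum_(x <- s) F x.
Proof.
move=> F0 ys; rewrite (perm_big _ (perm_to_rem ys)) big_cons lerDl.
exact: sumr_ge0.
Qed.

Lemma cvg_dist_harmonic (V : normedModType R) (u : nat -> V) (l : V) (K : R) :
  (forall n, `|u n - l| <= K * harmonic n) -> u n @[n --> \oo] --> l.
Proof.
move=> ul; apply/subr_cvg0; apply: norm_cvg0.
apply: (@squeeze_cvgr _ _ _ _ (cst 0) (fun n => K * harmonic n)).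
- by near=> n; rewrite normr_ge0 ul.
- exact: cvg_cst.
- by rewrite -(mulr0 K); apply: cvgM; [exact: cvg_cst|exact: cvg_harmonic].
Unshelve. all: by end_near. Qed.

Lemma cvg_of_dist_le (V : completeNormedModType R) (z : nat -> V) (a : nat -> R) :
  a n @[n --> \oo] --> 0 -> (forall n m, `|z n - z m| <= a n + a m) -> cvgn z.
Proof.
move=> a0 za; apply/cauchy_cvgP/cauchy_ballP => e e0; rewrite !near_simpl /=.
near=> n m; rewrite -ball_normE /= (le_lt_trans (za n m)) // [e]splitr ltrD //.
  by near: n; apply: (cvgr_lt 0 a0); rewrite divr_gt0.
by near: m; apply: (cvgr_lt 0 a0); rewrite divr_gt0.
Unshelve. all: by end_near. Qed.

End Sequences.

Section DualSpace.
Variables (R : realType) (X : normedModType R).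
Implicit Types (f g : X -> R) (Y C : set (X -> R)).

Lemma dualp0 f : dualp f -> f 0 = 0.
Proof.
case=> lin _; have := lin 1 0 0; rewrite scale1r addr0 mul1r => f00.
by apply: (addrI (f 0)); rewrite addr0 -f00.
Qed.

Lemma dualpZ f a x : dualp f -> f (a *: x) = a * f x.
Proof. by move=> df; have := df.1 a x 0; rewrite !addr0 dualp0 ?addr0. Qed.

Lemma dualpD f x y : dualp f -> f (x + y) = f x + f y.
Proof. by move=> df; have := df.1 1 x y; rewrite scale1r mul1r. Qed.

Lemma dualpB f x y : dualp f -> f (x - y) = f x - f y.
Proof. by move=> df; rewrite dualpD // -scaleN1r dualpZ // mulN1r. Qed.

Lemma dualp_sum f (s : seq X) (a : X -> R) : dualp f ->
  f (\sum_(x <- s) a x *: x) = \sum_(x <- s) a x * f x.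
Proof.
move=> df; elim: s => [|y s IH]; first by rewrite !big_nil dualp0.
by rewrite !big_cons dualpD // dualpZ // IH.
Qed.

Lemma dualp_bounded f : dualp f -> exists K : R, forall x, `|x| <= 1 -> `|f x| <= K.
Proof.
move=> df; have := df.2 0; rewrite /continuous_at dualp0 //.
move=> /cvgrPdist_lt /(_ 1 ltr01); rewrite nearE /= => /nbhs_ballP [d /= d0 hd].
exists (2 / d) => x x1.
have d2 : 0 <= d / 2 by rewrite divr_ge0 // ltW.
have hx : ball (0 : X) d ((d / 2) *: x).
  rewrite -ball_normE /= sub0r normrN normrZ ger0_norm //.
  apply: (le_lt_trans (ler_wpM2l d2 x1)).
  by rewrite mulr1 ltr_pdivrMr // ltr_pMr // ltr1n.
have := hd _ hx; rewrite /= dualpZ // sub0r normrN normrM ger0_norm // => fx.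
have -> : `|f x| = (2 / d) * (d / 2 * `|f x|) by field; rewrite gt_eqF.
by rewrite -[leRHS]mulr1 ler_wpM2l ?divr_ge0 // ?ltW.
Qed.

Lemma le_dual_norm_ball f x : dualp f -> `|x| <= 1 -> `|f x| <= dual_norm f.
Proof.
move=> df x1; have [K fK] := dualp_bounded df.
by apply: ub_le_sup; [exists K => _ [y y1 <-]; exact: fK | exists x].
Qed.

Lemma dual_norm_ge0 f : dualp f -> 0 <= dual_norm f.
Proof.
by move=> df; have := @le_dual_norm_ball f 0 df; rewrite normr0 dualp0 // normr0; apply.
Qed.

Lemma le_dual_norm f x : dualp f -> `|f x| <= dual_norm f * `|x|.
Proof.
move=> df; have [->|x0] := eqVneq x 0; first by rewrite dualp0 // !normr0 mulr0.
have nx : 0 < `|x| by rewrite normr_gt0.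
have := @le_dual_norm_ball f (`|x|^-1 *: x) df.
rewrite normrZ normfV normr_id mulVf ?gt_eqF // lexx dualpZ // normrM normfV normr_id.
by move=> /(_ isT); rewrite mulrC ler_pdivrMr.
Qed.

Lemma dual_norm_le f (M : R) : 0 <= M -> (forall x, `|f x| <= M * `|x|) ->
  dual_norm f <= M.
Proof.
move=> M0 fM; apply: ge_sup; first by exists `|f 0|, 0 => //=; rewrite normr0 ler01.
by move=> _ [y y1 <-]; apply: (le_trans (fM y)); rewrite -[leRHS]mulr1 ler_wpM2l.
Qed.

Lemma dual_norm0_le (M : R) : 0 <= M -> dual_norm (fun _ : X => 0) <= M.
Proof. by move=> M0; apply: dual_norm_le => // x; rewrite normr0 mulr_ge0. Qed.

Lemma dual_subspaceZ Y a f : dual_subspace Y -> Y f -> Y (fun x => a * f x).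
Proof.
case=> _ Y0 YD Yf; have := YD a f (fun _ => 0) Yf Y0.
by congr Y; apply/funext => x; rewrite addr0.
Qed.

Lemma dual_subspace_ball_convex Y (M : R) : dual_subspace Y -> 0 <= M ->
  dual_convex [set g | Y g /\ dual_norm g <= M].
Proof.
move=> dY M0 g h t [Yg gM] [Yh hM] /andP [t0 t1]; have [Ysub _ YD] := dY.
split; first exact: YD _ _ _ Yg (dual_subspaceZ _ dY Yh).
have t1' : 0 <= 1 - t by rewrite subr_ge0.
apply: dual_norm_le => // x; apply: (le_trans (ler_normD _ _)).
rewrite !normrM (ger0_norm t0) (ger0_norm t1').
have gx := le_trans (le_dual_norm x (Ysub _ Yg)) (ler_wpM2r (normr_ge0 x) gM).
have hx := le_trans (le_dual_norm x (Ysub _ Yh)) (ler_wpM2r (normr_ge0 x) hM).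
apply: (le_trans (lerD (ler_wpM2l t0 gx) (ler_wpM2l t1' hx))).
by rewrite -mulrDl addrC subrK mul1r.
Qed.

Lemma norming_witness Y : norming Y -> exists2 c : R, 0 < c & forall v : X,
  exists g, [/\ Y g, dual_norm g <= 1 & c * `|v| <= g v].
Proof.
case=> [[_ Y0 _] [c [m [c0 [_ Ycm]]]]].
have N0 := dual_norm0_le ler01.
exists (c / 2); first by rewrite divr_gt0.
move=> v; have [->|v0] := eqVneq v 0; first by exists (fun _ => 0); rewrite normr0 mulr0.
have : c / 2 * `|v| < norming_norm Y v.
  apply: (lt_le_trans _ (Ycm v).1).
  by rewrite ltr_pM2r ?normr_gt0 // ltr_pdivrMr // ltr_pMr // ltr1n.
case/sup_gt; first by exists 0, (fun _ => 0).
by move=> _ [g [Yg g1] <-] /ltW cg; exists g.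
Qed.

(* The sum is the variational inequality of an approximate minimiser g0 of
   g |-> \sum_(x <- s) (g x - f x) ^+ 2 on C, obtained by comparing g0 with
   t g + (1 - t) g0 for a small t. *)
Lemma approx_projection C (M : R) (s : seq X) f :
  dual_convex C -> C !=set0 -> (forall g, C g -> forall x, `|g x| <= M * `|x|) ->
  forall d : R, 0 < d -> exists2 g0, C g0 &
    forall g, C g -> \sum_(x <- s) (f x - g0 x) * (g x - g0 x) <= d.
Proof.
move=> Cconv [g1 Cg1] CM d d0.
pose dist2 g := \sum_(x <- s) (g x - f x) ^+ 2.
pose B := \sum_(x <- s) (2 * M * `|x|) ^+ 2 + 1.
have B0 : 0 < B by rewrite ltr_wpDl // sumr_ge0 // => x _; rewrite sqr_ge0.
have Mx (x : X) : 0 <= 2 * M * `|x|.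
  by rewrite -mulrA mulr_ge0 // (le_trans (normr_ge0 _) (CM _ Cg1 x)).
have CB g g' : C g -> C g' -> \sum_(x <- s) (g x - g' x) ^+ 2 <= B.
  move=> Cg Cg'; rewrite -[leLHS]addr0 lerD // ler_sum // => x _.
  rewrite -real_normK ?num_real // lerXn2r ?nnegrE ?normr_ge0 ?Mx //.
  by rewrite (le_trans (ler_normB _ _)) // -mulrA mulr_natl mulr2n lerD ?CM.
pose t := d / (B + d).
have Bd : 0 < B + d by rewrite addr_gt0.
have t0 : 0 < t by rewrite divr_gt0.
have t1 : t <= 1 by rewrite /t ler_pdivrMr // mul1r lerDr ltW.
have tB : t * B <= d.
  by rewrite /t mulrAC ler_pdivrMr // ler_wpM2l ?lerDl // ltW.
have dist2_lb : has_lbound (dist2 @` C).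
  by exists 0 => _ [g _ <-]; apply: sumr_ge0 => x _; rewrite sqr_ge0.
have dist2_ne : dist2 @` C !=set0 by exists (dist2 g1), g1.
have [_ [g0 Cg0 <-] g0_inf] := inf_adherent (mulr_gt0 t0 d0) (conj dist2_ne dist2_lb).
exists g0 => // g Cg.
set S := \sum_(x <- s) _; pose Q := \sum_(x <- s) (g x - g0 x) ^+ 2.
have t01 : 0 <= t <= 1 by rewrite ltW.
have expand : dist2 (fun x => t * g x + (1 - t) * g0 x) =
    dist2 g0 - 2 * t * S + t ^+ 2 * Q.
  rewrite /dist2 /S /Q !mulr_sumr -sumrB -big_split /=.
  by apply: eq_bigr => x _; ring.
have tQ : t ^+ 2 * Q <= t * d.
  rewrite expr2 -mulrA ler_wpM2l ?(ltW t0) // (le_trans _ tB) //.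
  by rewrite ler_wpM2l ?(ltW t0) ?CB.
have := ge_inf dist2_lb (ex_intro2 _ _ _ (Cconv _ _ t Cg Cg0 t01) erefl).
rewrite expand => inf_le.
have : t * (2 * S) < t * (2 * d) by lra.
by rewrite ltr_pM2l // => ?; lra.
Qed.

Lemma wstar_closure_dominated C (M : R) f :
  C `<=` @dualset R X -> dual_convex C -> C !=set0 ->
  (forall g, C g -> forall x, `|g x| <= M * `|x|) -> dualp f ->
  (forall v, exists2 g, C g & f v <= g v) -> wstar_closure C f.
Proof.
move=> Csub Cconv C0 CM df fC; split=> // s e e0.
have e2 : 0 < e ^+ 2 / 2 by rewrite divr_gt0 ?exprn_gt0.
have [g0 Cg0 g0_proj] := approx_projection s f Cconv C0 CM e2.
pose v := \sum_(x <- s) (f x - g0 x) *: x.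
have [g Cg fg] := fC v.
have dist2_small : \sum_(x <- s) (g0 x - f x) ^+ 2 <= e ^+ 2 / 2.
  have dv h : dualp h -> h v - g0 v = \sum_(x <- s) (f x - g0 x) * (h x - g0 x).
    move=> dh; rewrite /v !dualp_sum //; last exact: Csub.
    by rewrite -sumrB; apply: eq_bigr => x _; ring.
  have fv : f v - g0 v = \sum_(x <- s) (g0 x - f x) ^+ 2.
    by rewrite dv //; apply: eq_bigr => x _; ring.
  have gv := dv _ (Csub _ Cg).
  by rewrite -fv (le_trans _ (g0_proj _ Cg)) // -gv lerB.
exists g0; split=> // x xs.
have := ler_sum_mem (F := fun y => (g0 y - f y) ^+ 2) (fun y => sqr_ge0 _) xs.
move=> /le_trans /(_ dist2_small) x_small.
rewrite -ltr_sqr ?nnegrE ?normr_ge0 ?(ltW e0) // real_normK ?num_real //.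
by apply: le_lt_trans x_small _; rewrite ltr_pdivrMr // ltr_pMr ?exprn_gt0 // ltr1n.
Qed.

Lemma S1_norming Y : efremov X -> norming Y -> S1 Y = @dualset R X.
Proof.
move=> Ef nY; apply/seteqP; split=> [f [] //|f df].
have [c c0 Ywit] := norming_witness nY; have [[Ysub Y0 _] _] := nY; have [dY _] := nY.
pose M := dual_norm f / c.
have M0 : 0 <= M by rewrite divr_ge0 ?dual_norm_ge0 // ltW.
pose C := [set g | Y g /\ dual_norm g <= M].
have Csub : C `<=` @dualset R X by move=> g [Yg _]; exact: Ysub.
have Cconv : dual_convex C := dual_subspace_ball_convex dY M0.
have C0 : C (fun _ => 0) by split=> //; exact: dual_norm0_le.
have CM g : C g -> forall x, `|g x| <= M * `|x|.
  by case=> Yg gM x; rewrite (le_trans (le_dual_norm x (Ysub _ Yg))) // ler_wpM2r.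
have fC v : exists2 g, C g & f v <= g v.
  have [g [Yg g1 cg]] := Ywit v.
  exists (fun x => M * g x).
    split; first exact: dual_subspaceZ.
    apply: dual_norm_le => // x; rewrite normrM ger0_norm // ler_wpM2l //.
    by rewrite (le_trans (le_dual_norm x (Ysub _ Yg))) // ler_piMl.
  rewrite (le_trans (ler_norm _)) // (le_trans (le_dual_norm v df)) //.
  have -> : dual_norm f = M * c by rewrite /M divfK // gt_eqF.
  by rewrite -mulrA ler_wpM2l.
have := wstar_closure_dominated Csub Cconv (ex_intro _ _ C0) CM df fC.
rewrite -Ef // => [[_ [u [uC uf]]]|]; last by exists M => g [].
by split=> //; exists u; split=> // n; exact: (uC n).1.
Qed.

Lemma norming_norm_ub Y x : dual_subspace Y ->
  ubound [set f x | f in [set f | Y f /\ dual_norm f <= 1]] `|x|.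
Proof.
case=> Ysub _ _ _ [f [Yf f1] <-]; rewrite (le_trans (ler_norm _)) //.
by rewrite (le_trans (le_dual_norm x (Ysub _ Yf))) // ler_piMl.
Qed.

Lemma norming_norm_le Y x : dual_subspace Y -> norming_norm Y x <= `|x|.
Proof.
move=> dY; have [_ Y0 _] := dY; apply: ge_sup; last exact: norming_norm_ub.
by exists 0, (fun _ => 0) => //; split=> //; exact: dual_norm0_le.
Qed.

Lemma le_norming_norm Y f x : dual_subspace Y -> Y f ->
  `|f x| <= dual_norm f * norming_norm Y x.
Proof.
move=> dY Yf; have [Ysub _ _] := dY; have df := Ysub _ Yf.
have [f0|fpos] := eqVneq (dual_norm f) 0.
  by have := le_dual_norm x df; rewrite f0 !mul0r.
have fpos' : 0 < dual_norm f by rewrite lt_neqAle eq_sym fpos dual_norm_ge0.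
have scaled a : `|a| = (dual_norm f)^-1 -> a * f x <= norming_norm Y x.
  move=> aE; apply: ub_le_sup; first by exists `|x|; exact: norming_norm_ub.
  exists (fun y => a * f y) => //; split; first exact: dual_subspaceZ.
  apply: dual_norm_le => // y; rewrite normrM aE ler_pdivrMl // mul1r.
  exact: le_dual_norm.
rewrite ler_norml lerNl -!ler_pdivrMl // mulrN -mulNr !scaled //.
  by rewrite ger0_norm // invr_ge0 ltW.
by rewrite normrN ger0_norm // invr_ge0 ltW.
Qed.

Lemma norming_norm_ge0 Y x : dual_subspace Y -> 0 <= norming_norm Y x.
Proof.
move=> dY; have [_ Y0 _] := dY.
apply: ub_le_sup; first by exists `|x|; exact: norming_norm_ub.
by exists (fun _ => 0) => //; split=> //; exact: dual_norm0_le.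
Qed.

Lemma not_norming_small Y : dual_subspace Y -> ~ norming Y ->
  forall d : R, 0 < d -> exists2 x : X, x != 0 &
    forall f, Y f -> `|f x| <= dual_norm f * (d * `|x|).
Proof.
move=> dY nY d d0; have [Ysub _ _] := dY.
have [x Nx] : exists x, norming_norm Y x < d * `|x|.
  apply: contrapT => Nlarge; apply: nY; split=> //; exists d, 1.
  do 3 split=> //; last by rewrite mul1r norming_norm_le.
  by rewrite leNgt; apply/negP => ?; apply: Nlarge; exists x.
exists x.
  by apply: contraTneq Nx => ->; rewrite normr0 mulr0 -leNgt norming_norm_ge0.
move=> f Yf; rewrite (le_trans (le_norming_norm x dY Yf)) // ler_wpM2l ?(ltW Nx) //.
exact: dual_norm_ge0 (Ysub _ Yf).
Qed.

Section LinearOn.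
Variables (Y : set (X -> R)) (F : (X -> R) -> R).
Hypotheses (dY : dual_subspace Y) (lF : linear_on Y F).

Lemma linear_on0 : F (fun _ => 0) = 0.
Proof.
have [_ Y0 _] := dY; have := lF 1 Y0 Y0; rewrite /= !mul1r addr0 => F00.
by apply: (addrI (F (fun _ => 0))); rewrite addr0 -F00.
Qed.

Lemma linear_onZ a g : Y g -> F (fun x => a * g x) = a * F g.
Proof.
have [_ Y0 _] := dY; move=> Yg; have := lF a Yg Y0; rewrite linear_on0 addr0 => <-.
by congr F; apply/funext => x; rewrite addr0.
Qed.

Lemma linear_on_bounded : wstar_seq_continuous_on Y F ->
  exists2 L : R, 0 < L & forall g, Y g -> `|F g| <= L * dual_norm g.
Proof.
move=> sF; have [Ysub Y0 _] := dY; apply: contrapT => Lnone.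
have big n : exists g, Y g /\ n.+1%:R * dual_norm g < `|F g|.
  apply: contrapT => nbig; apply: Lnone; exists n.+1%:R => // g Yg.
  by rewrite leNgt; apply/negP => ?; apply: nbig; exists g.
have [g gbig] := choice big.
have {gbig} [Yg gbig] : (forall n, Y (g n)) /\
    forall n, n.+1%:R * dual_norm (g n) < `|F (g n)| by split=> n; case: (gbig n).
have Fg0 n : 0 < `|F (g n)|.
  by rewrite (le_lt_trans _ (gbig n)) // mulr_ge0 //; apply/dual_norm_ge0/Ysub.
pose u n x := `|F (g n)|^-1 * g n x.
have Yu n : Y (u n) := dual_subspaceZ _ dY (Yg n).
have Fu n : `|F (u n)| = 1.
  by rewrite linear_onZ ?(Yg n) // normrM normfV normr_id mulVf ?gt_eqF.
have u0 : wstar_cvg u (fun _ => 0).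
  move=> x; apply: (@cvg_dist_harmonic _ _ _ _ `|x|) => n.
  have gn : dual_norm (g n) <= harmonic n * `|F (g n)|.
    by rewrite /= ler_pdivlMl // ltW // (gbig n).
  rewrite subr0 normrM normfV normr_id ler_pdivrMl //.
  rewrite (le_trans (le_dual_norm x (Ysub _ (Yg n)))) // [leRHS]mulrCA [leRHS]mulrC.
  by rewrite ler_wpM2r // mulrC.
have : (fun _ => 1) @ \oo --> (0 : R).
  by rewrite -(funext Fu) -(normr0 R) -linear_on0; apply: cvg_norm; exact: sF.
move=> /(cvg_lim (@Rhausdorff R)); rewrite lim_cst // => one0.
by have := @oner_neq0 R; rewrite one0 eqxx.
Qed.

Lemma dual_subspace_kernel : dual_subspace [set g | Y g /\ F g = 0].
Proof.
have [Ysub Y0 YD] := dY; split=> [g [Yg _]|//|a f g [Yf Ff] [Yg Fg]].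
- exact: Ysub.
- by split=> //; exact: linear_on0.
- by split; [exact: YD | rewrite lF // Ff Fg mulr0 addr0].
Qed.

Lemma kernel_norming_eq0 : efremov X -> wstar_seq_continuous_on Y F ->
  norming [set g | Y g /\ F g = 0] -> forall g, Y g -> F g = 0.
Proof.
move=> Ef sF nH g Yg; have [Ysub _ _] := dY.
have : S1 [set g | Y g /\ F g = 0] g by rewrite S1_norming //; exact: Ysub.
case=> _ [u [uH ug]].
have Fu0 : (fun n => F (u n)) = cst 0 by apply/funext => n; case: (uH n).
have := sF u g (fun n => (uH n).1) Yg ug; rewrite Fu0.
by move=> /(cvg_lim (@Rhausdorff R)); rewrite lim_cst.
Qed.

Lemma approx_eval_of_kernel_not_norming : norming Y -> wstar_seq_continuous_on Y F ->
  ~ norming [set g | Y g /\ F g = 0] -> forall g0, Y g0 -> F g0 = 1 ->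
  forall e : R, 0 < e -> exists z : X, forall g, Y g -> `|g z - F g| <= e * dual_norm g.
Proof.
move=> nY sF nH g0 Yg0 Fg01 e e0; have [Ysub _ YD] := dY.
have [c c0 Ywit] := norming_witness nY.
have [L L0 FL] := linear_on_bounded sF.
have ng0 := dual_norm_ge0 (Ysub _ Yg0).
pose K := 1 + L * dual_norm g0.
have K0 : 0 < K by rewrite ltr_pwDl // mulr_ge0 // ltW.
(* the projection of g onto the kernel of F along g0 *)
pose kerp g x := - F g * g0 x + g x.
have kerpH g : Y g -> Y (kerp g) /\ F (kerp g) = 0.
  by move=> Yg; split; [exact: YD | rewrite lF // Fg01 mulr1 addNr].
have kerp_norm g : Y g -> dual_norm (kerp g) <= K * dual_norm g.
  move=> Yg; have ng := dual_norm_ge0 (Ysub _ Yg).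
  apply: dual_norm_le => [|x]; first by rewrite mulr_ge0 // ltW.
  rewrite (le_trans (ler_normD _ _)) // normrM normrN !mulrDl mul1r addrC lerD //.
    exact: le_dual_norm (Ysub _ Yg).
  have -> : L * dual_norm g0 * dual_norm g * `|x| =
    L * dual_norm g * (dual_norm g0 * `|x|) by ring.
  by rewrite ler_pM //; [exact: FL | exact: le_dual_norm (Ysub _ Yg0)].
pose delta := c / 2 * (e / (L + e)).
have Le0 : 0 < L + e by rewrite addr_gt0.
have delta0 : 0 < delta by rewrite !mulr_gt0 ?invr_gt0.
have delta_c : delta <= c / 2.
  by rewrite ler_piMr ?divr_ge0 ?(ltW c0) // ler_pdivrMr // mul1r lerDr ltW.
have delta_e : delta * (2 * L) <= e * c.
  have -> : delta * (2 * L) = e * c * (L / (L + e)).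
    by rewrite /delta; field; rewrite gt_eqF.
  by rewrite ler_piMr ?mulr_ge0 ?(ltW e0) ?(ltW c0) // ler_pdivrMr // mul1r lerDl ltW.
have [v v0 v_small] := not_norming_small dual_subspace_kernel nH (divr_gt0 delta0 K0).
have eval_v g : Y g -> `|g v - F g * g0 v| <= delta * dual_norm g * `|v|.
  move=> Yg; have := v_small _ (kerpH _ Yg); rewrite /kerp addrC mulNr.
  move=> /le_trans; apply; apply: le_trans (ler_wpM2r _ (kerp_norm _ Yg)) _.
    by rewrite mulr_ge0 // divr_ge0 // ltW.
  suff -> : K * dual_norm g * (delta / K * `|v|) = delta * dual_norm g * `|v| by [].
  by field; rewrite gt_eqF.
have g0v : c / 2 * `|v| <= L * `|g0 v|.
  have [gw [Ygw gw1 cgw]] := Ywit v.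
  have gw_v : gw v - F gw * g0 v <= delta * `|v|.
    rewrite (le_trans (ler_norm _)) // (le_trans (eval_v _ Ygw)) // ler_wpM2r //.
    by rewrite ler_piMr // ltW.
  have Fgw_g0v : F gw * g0 v <= L * `|g0 v|.
    rewrite (le_trans (ler_norm _)) // normrM ler_wpM2r // (le_trans (FL _ Ygw)) //.
    by rewrite ler_piMr // ltW.
  have := ler_wpM2r (normr_ge0 v) delta_c; lra.
have g0v_gt0 : 0 < `|g0 v|.
  have : 0 < L * `|g0 v| by apply: lt_le_trans g0v; rewrite mulr_gt0 ?divr_gt0 ?normr_gt0.
  by rewrite pmulr_rgt0.
exists ((g0 v)^-1 *: v) => g Yg; have ng := dual_norm_ge0 (Ysub _ Yg).
have -> : g ((g0 v)^-1 *: v) - F g = (g v - F g * g0 v) / g0 v.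
  rewrite dualpZ; last exact: Ysub.
  by field; rewrite -normr_gt0.
rewrite normrM normfV ler_pdivrMr // (le_trans (eval_v _ Yg)) // -(ler_pM2l c0).
have := ler_wpM2l (mulr_ge0 (mulr_ge0 (ltW delta0) ng) (ler0n _ 2)) g0v.
have := ler_wpM2r (mulr_ge0 ng (normr_ge0 (g0 v))) delta_e.
nra.
Qed.

Lemma linear_on_approx_eval : efremov X -> norming Y -> wstar_seq_continuous_on Y F ->
  forall e : R, 0 < e -> exists z : X, forall g, Y g -> `|g z - F g| <= e * dual_norm g.
Proof.
move=> Ef nY sF e e0; have [Ysub _ _] := dY.
have [[g1 Yg1 Fg1]|F0] := pselect (exists2 g, Y g & F g != 0); last first.
  exists 0 => g Yg; have -> : F g = 0 by apply: contrapT => /eqP Fg; apply: F0; exists g.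
  rewrite dualp0 ?subr0 ?normr0; last exact: Ysub.
  exact: mulr_ge0 (ltW e0) (dual_norm_ge0 (Ysub _ Yg)).
pose g0 x := (F g1)^-1 * g1 x.
apply: (approx_eval_of_kernel_not_norming nY sF _ (g0 := g0)) => //.
- by move=> nH; move/eqP: Fg1; apply; exact: kernel_norming_eq0.
- exact: dual_subspaceZ.
- by rewrite linear_onZ // mulVf.
Qed.

End LinearOn.

End DualSpace.

Lemma eval_of_approx_eval (R : realType) (X : completeNormedModType R)
    (Y : set (X -> R)) (F : (X -> R) -> R) : norming Y ->
  (forall e : R, 0 < e ->
    exists z : X, forall g, Y g -> `|g z - F g| <= e * dual_norm g) ->
  exists x0 : X, forall g, Y g -> F g = g x0.
Proof.
move=> nY Fapprox; have [[Ysub _ _] _] := nY; have [c c0 Ywit] := norming_witness nY.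
have [z zF] := choice (fun n => Fapprox _ (harmonic_gt0 n)).
have z_cvg : cvgn z.
  apply: (@cvg_of_dist_le _ _ _ (fun n => harmonic n / c)).
    by rewrite -(mul0r c^-1); apply: cvgM; [exact: cvg_harmonic | exact: cvg_cst].
  move=> n m; rewrite -mulrDl ler_pdivlMr // mulrC.
  have [g [Yg g1 cg]] := Ywit (z n - z m).
  rewrite (le_trans cg) // dualpB; last exact: Ysub.
  have zFg k : `|g (z k) - F g| <= harmonic k.
    by rewrite (le_trans (zF k _ Yg)) // ler_piMr ?harmonic_ge0.
  by have := zFg n; have := zFg m; rewrite !ler_norml => /andP[? ?] /andP[? ?]; lra.
exists (lim (z @ \oo)) => g Yg.
have gzF : g (z n) @[n --> \oo] --> F g.
  by apply: (@cvg_dist_harmonic _ _ _ _ (dual_norm g)) => n; rewrite mulrC zF.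
have gz_lim : g (z n) @[n --> \oo] --> g (lim (z @ \oo)).
  exact: continuous_cvg _ ((Ysub _ Yg).2 _) z_cvg.
exact: cvg_unique _ gzF gz_lim.
Qed.

Theorem corollary3p4 (R : realType) (X : completeNormedModType R) :
  @efremov R X ->
  (forall Y : set (X -> R), norming Y -> S1 Y = @dualset R X) /\ @fully_mazur R X.
Proof.
move=> Ef; split=> [Y nY|Y nY _ F lF sF]; first exact: S1_norming.
have [dY _] := nY.
have [x0 Fx0] := eval_of_approx_eval nY (linear_on_approx_eval dY lF Ef nY sF).
move=> f Yf e e0; exists [:: x0], e; split=> // g Yg gf.
by rewrite !Fx0 //; apply: gf; rewrite mem_seq1.
Qed.
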